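(* There exist instances of CLC choice and a valid order-price pair $(\pi,\mathbf p)$ for such an instance such that $\mathbf p$ is not a local Nash equilibrium.
   Context: CLC setup. There are $N$ sellers $\mathcal N=\{1,\dots,N\}$, each selling one item, and a unit mass of customers, each buying at most one item. Items have a price attribute (indexed $0$) and $K$ non-price attributes indexed by $\mathcal A=\{1,\dots,K\}$; $\bar{\mathcal A}=\{0\}\cup\mathcal A$. Non-price attribute $k$ takes values in an arbitrary set $\mathcal V^k$; prices lie in $\mathcal V=[0,\bar v]$ for a fixed $\bar v>0$. Seller $i$'s item has fixed non-price attribute values $v_i^k\in\mathcal V^k$ and price $p_i\in\mathcal V$ chosen by seller $i$; $\mathbf p=(p_1,\dots,p_N)$, and $v_i^0:=p_i$. Each customer $c$ has: a strict total order $\succ_c$ on $\bar{\mathcal A}$ (attribute importance); for each attribute $k$ a complete transitive weak preference $\succsim_c^k$ on its value set, with strict part $\succ_c^k$ and indifference $\sim_c^k$ (and $v\sim_c^k v$), where for price $p\succ_c^0p'$ iff $p<p'$ and $p\sim_c^0p'$ iff $p=p'$; a willingness-to-pay $w_c\in[0,\bar v]$; a set $\mathcal C_c\subseteq\mathcal V^1\times\cdots\times\mathcal V^K$ of admissible non-price attribute vectors; and a strict tie-breaking order over sellers. Customer $c$ lexicographically prefers item $i$ to item $j$ if there is an attribute $k$ with $v_i^{k'}\sim_c^{k'}v_j^{k'}$ for all $k'\succ_c k$ and $v_i^k\succ_c^k v_j^k$; if no such $k$ exists, the tie-breaking order decides. Under the Consider-then-Choose with Lexicographic Choice (CLC) model,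 customer $c$ forms the consideration set $\mathcal N_c=\{i\in\mathcal N: p_i\le w_c,\ (v_i^1,\dots,v_i^K)\in\mathcal C_c\}$, buys nothing if it is empty, and otherwise buys the top-ranked item of $\mathcal N_c$ under this lexicographic order (with tie-breaking). An instance of CLC choice is a joint distribution $\mathcal G$ of these customer primitives; the conditional distribution of $w_c$ given the other primitives is assumed to have a Lipschitz continuous density. $D_i(\mathbf p)$ is the probability a customer buys from seller $i$ and $R_i(\mathbf p)=p_iD_i(\mathbf p)$ is seller $i$'s revenue, also written $R_i(p_i,\mathbf p_{-i})$. Local Nash equilibrium (LNE): $\mathbf p$ with $p_i\in\mathcal V$ for all $i$ such that there exist open neighborhoods $\mathcal U_i\subseteq\mathbb R$ with $p_i\in\mathcal U_i$ and $p_i\in\arg\max_{p\in\overline{\mathcal U_i}}R_i(p,\mathbf p_{-i})$ for all $i$ ($\overline{\mathcal U}$ is the closure). Notation: for $\mathcal S\subseteq\mathcal N$, $\mathbf p^{\mathcal S}$ is the price vector keeping the prices of sellers in $\mathcal S$ and setting the prices of all sellers outside $\mathcal S$ to $0$; $p^{\min}(\mathcal S)=\min_{j\in\mathcal S}p_j$, with $p^{\min}(\emptyset)=\bar v$. Valid order-price pair (VOP): a pair $(\pi,\mathbf p)$ where $\pi:[N]\to\mathcal N$ is a bijection ($\pi(l)$ is the seller of rank $l$) and $\mathbf p\in\mathcal V^N$ satisfies (1) $0\le p_{\pi(N)}\le\cdots\le p_{\pi(1)}\le\bar v$, and (2) letting $\mathcal S_1=\emptyset$ and $\mathcal S_l=\{\pi(j):j<l\}$,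 for every $l$ the price $p_{\pi(l)}$ is a local maximum of $p\mapsto R_{\pi(l)}(p,\mathbf p^{\mathcal S_l}_{-\pi(l)})$ on the interval $[0,p^{\min}(\mathcal S_l)]$. *)

From Stdlib Require Import Reals Lra List ClassicalDescription.
From Coquelicot Require Import Coquelicot.
Open Scope R_scope.

Definition indic (P : Prop) : R :=
  if excluded_middle_informative P then 1 else 0.

(* Setup: sellers 0..N-1, attributes 0..K (0 = price, 1..K non-price). *)
Record clc_setup := {
  nS   : nat;
  nK   : nat;
  vbar : R;
  AV   : nat -> Type;
  item : nat -> forall k, AV k
}.

(* Primitives of one customer type (everything except the WTP, which is
   drawn from the density [dens]). *)
Record customer (s : clc_setup) := {
  imp  : nat -> nat -> Prop;                      (* imp a b : a >_c b (a more important) *)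
  pref : forall k, AV s k -> AV s k -> Prop;
  adm  : (forall k, AV s k) -> Prop;
  tb   : nat -> nat -> Prop;                      (* tb i j : i preferred to j in tie-break *)
  dens : R -> R
}.
Arguments imp {s}. Arguments pref {s}. Arguments adm {s}.
Arguments tb {s}. Arguments dens {s}.

Definition strict_total_on (n : nat) (r : nat -> nat -> Prop) : Prop :=
  (forall a, (a < n)%nat -> ~ r a a) /\
  (forall a b c, (a < n)%nat -> (b < n)%nat -> (c < n)%nat -> r a b -> r b c -> r a c) /\
  (forall a b, (a < n)%nat -> (b < n)%nat -> a <> b -> r a b \/ r b a).

Definition valid_customer (s : clc_setup) (c : customer s) : Prop :=
  strict_total_on (S (nK s)) (imp c) /\
  (forall k, (1 <= k <= nK s)%nat ->
     (forall x y : AV s k, pref c k x y \/ pref c k y x) /\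
     (forall x y z : AV s k, pref c k x y -> pref c k y z -> pref c k x z)) /\
  (forall x y : forall k, AV s k,
     (forall k, (1 <= k <= nK s)%nat -> x k = y k) -> (adm c x <-> adm c y)) /\
  strict_total_on (nS s) (tb c) /\
  (forall w, 0 <= w <= vbar s -> 0 <= dens c w) /\
  (exists L, forall x y, 0 <= x <= vbar s -> 0 <= y <= vbar s ->
       Rabs (dens c x - dens c y) <= L * Rabs (x - y)) /\
  ex_RInt (dens c) 0 (vbar s) /\ RInt (dens c) 0 (vbar s) = 1.

(* An instance of CLC choice: a finite mixture of customer types
   (probability q_t of type t), WTP of type t distributed with density dens. *)
Definition instance (s : clc_setup) := list (R * customer s).

Definition valid_instance (s : clc_setup) (G : instance s) : Prop :=
  (forall qc, In qc G -> 0 <= fst qc /\ valid_customer s (snd qc)) /\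
  fold_right (fun qc acc => fst qc + acc) 0 G = 1.

Section Choice.
Variables (s : clc_setup) (c : customer s) (p : nat -> R).

Definition strict_at (i j k : nat) : Prop :=
  match k with
  | O => p i < p j
  | _ => pref c k (item s i k) (item s j k) /\ ~ pref c k (item s j k) (item s i k)
  end.

Definition indiff_at (i j k : nat) : Prop :=
  match k with
  | O => p i = p j
  | _ => pref c k (item s i k) (item s j k) /\ pref c k (item s j k) (item s i k)
  end.

Definition lexpref (i j : nat) : Prop :=
  exists k, (k <= nK s)%nat /\
    (forall k', (k' <= nK s)%nat -> imp c k' k -> indiff_at i j k') /\
    strict_at i j k.

Definition ranks_above (i j : nat) : Prop :=
  lexpref i j \/ (~ lexpref i j /\ ~ lexpref j i /\ tb c i j).

Definition considered (w : R) (i : nat) : Prop :=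
  (i < nS s)%nat /\ p i <= w /\ adm c (item s i).

Definition buys (w : R) (i : nat) : Prop :=
  considered w i /\ forall j, considered w j -> j <> i -> ranks_above i j.
End Choice.

Definition demand (s : clc_setup) (G : instance s) (p : nat -> R) (i : nat) : R :=
  fold_right (fun qc acc =>
     fst qc * RInt (fun w => dens (snd qc) w * indic (buys s (snd qc) p w i)) 0 (vbar s)
     + acc) 0 G.

Definition upd (p : nat -> R) (i : nat) (x : R) : nat -> R :=
  fun j => if Nat.eq_dec j i then x else p j.

Definition revenue (s : clc_setup) (G : instance s) (p : nat -> R) (i : nat) (x : R) : R :=
  x * demand s G (upd p i x) i.

Definition closureR (U : R -> Prop) (x : R) : Prop :=
  forall eps, 0 < eps -> exists y, U y /\ Rabs (y - x) < eps.

Definition LNE (s : clc_setup) (G : instance s) (p : nat -> R) : Prop :=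
  (forall i, (i < nS s)%nat -> 0 <= p i <= vbar s) /\
  forall i, (i < nS s)%nat ->
    exists U : R -> Prop, open U /\ U (p i) /\
      forall x, closureR U x -> revenue s G p i x <= revenue s G p i (p i).

(* Valid order-price pairs. Ranks are 0..N-1 (rank l here = rank l+1 in
   the paper). *)
Definition restrict (S : nat -> Prop) (p : nat -> R) : nat -> R :=
  fun j => if excluded_middle_informative (S j) then p j else 0.

Definition Sset (pi : nat -> nat) (l : nat) : nat -> Prop :=
  fun j => exists m, (m < l)%nat /\ pi m = j.

Fixpoint pmin (vb : R) (pi : nat -> nat) (p : nat -> R) (l : nat) : R :=
  match l with
  | O => vb
  | S l' => match l' with
            | O => p (pi O)
            | _ => Rmin (pmin vb pi p l') (p (pi l'))
            end
  end.

Definition local_max_on (f : R -> R) (a b x : R) : Prop :=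
  a <= x <= b /\
  exists delta, 0 < delta /\
    forall y, a <= y <= b -> Rabs (y - x) < delta -> f y <= f x.

Definition VOP (s : clc_setup) (G : instance s) (pi : nat -> nat) (p : nat -> R) : Prop :=
  (forall l, (l < nS s)%nat -> (pi l < nS s)%nat) /\
  (forall l m, (l < nS s)%nat -> (m < nS s)%nat -> pi l = pi m -> l = m) /\
  (forall i, (i < nS s)%nat -> exists l, (l < nS s)%nat /\ pi l = i) /\
  (forall i, (i < nS s)%nat -> 0 <= p i <= vbar s) /\
  (forall l, (S l < nS s)%nat -> p (pi (S l)) <= p (pi l)) /\
  (forall l, (l < nS s)%nat ->
     local_max_on
       (fun x => revenue s G (restrict (Sset pi l) p) (pi l) x)
       0 (pmin (vbar s) pi p l) (p (pi l))).

(** A valid order-price pair only asks the seller of rank [l] to be locally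
    optimal on [[0, p^min(S_l)]], i.e. below the prices of the higher-ranked
    sellers, with those sellers present.  Take two sellers at price 0 and a
    customer who only admits seller 1.  Ranking seller 0 first is valid
    because seller 0 never sells, and it caps seller 1 at price 0; yet
    seller 1 faces uniform willingness-to-pay on [[0, 1]] and earns
    [x (1 - x) > 0] by raising its price to a small [x > 0]. *)

From Stdlib Require Import Reals Lra Lia ClassicalDescription.
From Coquelicot Require Import Coquelicot.
Open Scope R_scope.

Lemma indic_true (P : Prop) : P -> indic P = 1.
Proof.
  intros HP. unfold indic. destruct (excluded_middle_informative P); tauto.
Qed.

Lemma indic_false (P : Prop) : ~ P -> indic P = 0.
Proof.
  intros HP. unfold indic. destruct (excluded_middle_informative P); tauto.
Qed.

Lemma strict_total_on_lt (n : nat) : strict_total_on n lt.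
Proof. repeat split; intros; lia. Qed.

Lemma RInt_step (f : R -> R) (lo a hi : R) :
  lo <= a <= hi ->
  (forall w, lo < w < a -> f w = 0) -> (forall w, a < w < hi -> f w = 1) ->
  RInt f lo hi = hi - a.
Proof.
  intros Ha Hlow Hhigh.
  assert (Elow : forall w, Rmin lo a < w < Rmax lo a -> (fun _ => 0) w = f w).
  { intros w. rewrite Rmin_left, Rmax_right by lra. intros; symmetry; auto. }
  assert (Ehigh : forall w, Rmin a hi < w < Rmax a hi -> (fun _ => 1) w = f w).
  { intros w. rewrite Rmin_left, Rmax_right by lra. intros; symmetry; auto. }
  rewrite <- (RInt_Chasles f lo a hi).
  - rewrite <- (RInt_ext _ _ _ _ Elow), <- (RInt_ext _ _ _ _ Ehigh), !RInt_const.
    change ((a - lo) * 0 + (hi - a) * 1 = hi - a). ring.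
  - exact (ex_RInt_ext _ _ _ _ Elow (ex_RInt_const lo a 0)).
  - exact (ex_RInt_ext _ _ _ _ Ehigh (ex_RInt_const a hi 1)).
Qed.

Lemma demand_single_type (s : clc_setup) (c : customer s) (p : nat -> R) (i : nat) :
  demand s (cons (1, c) nil) p i
  = RInt (fun w => dens c w * indic (buys s c p w i)) 0 (vbar s).
Proof. unfold demand; simpl; ring. Qed.

Lemma local_max_on_point (f : R -> R) (a : R) : local_max_on f a a a.
Proof.
  split; [lra|]. exists 1. split; [lra|].
  intros y Hy _. replace y with a by lra. lra.
Qed.

Lemma local_max_on_of_max (f : R -> R) (a b x : R) :
  a <= x <= b -> (forall y, a <= y <= b -> f y <= f x) -> local_max_on f a b x.
Proof. intros Hx Hmax. split; [exact Hx|]. exists 1. split; [lra|]. auto. Qed.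

Lemma not_LNE_of_profitable_increase (s : clc_setup) (G : instance s)
    (p : nat -> R) (i : nat) (d : R) :
  (i < nS s)%nat -> 0 < d ->
  (forall x, p i < x < p i + d -> revenue s G p i (p i) < revenue s G p i x) ->
  ~ LNE s G p.
Proof.
  intros Hi Hd Hgain [_ HL].
  destruct (HL i Hi) as [U [HU [Upi Hmax]]].
  destruct (HU (p i) Upi) as [eps Heps].
  pose proof (cond_pos eps) as Heps_pos.
  set (x := p i + Rmin eps d / 2).
  assert (Hmin : 0 < Rmin eps d <= d /\ Rmin eps d <= eps).
  { repeat split; [apply Rmin_glb_lt; lra | apply Rmin_r | apply Rmin_l]. }
  assert (Ux : U x).
  { apply Heps. change (Rabs (x - p i) < eps). unfold x.
    rewrite Rabs_pos_eq; lra. }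
  assert (Hclos : closureR U x).
  { intros e He. exists x. split; [exact Ux|]. rewrite Rminus_diag, Rabs_R0. exact He. }
  specialize (Hmax x Hclos). specialize (Hgain x ltac:(unfold x; lra)). lra.
Qed.

Definition two_sellers : clc_setup :=
  {| nS := 2; nK := 1; vbar := 1; AV := fun _ => nat; item := fun i _ => i |}.

Definition seller_one_fan : customer two_sellers :=
  {| imp := lt;
     pref := fun _ _ _ => True;
     adm := fun (x : forall k, AV two_sellers k) => x 1%nat = 1%nat;
     tb := lt;
     dens := fun _ => 1 |}.

Definition seller_one_market : instance two_sellers := cons (1, seller_one_fan) nil.

Lemma valid_seller_one_fan : valid_customer two_sellers seller_one_fan.
Proof.
  split; [apply strict_total_on_lt|].
  split; [intros k _; split; intros; simpl; tauto|].
  split; [intros x y Exy; cbn; rewrite (Exy 1%nat) by (simpl; lia); tauto|].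
  split; [apply strict_total_on_lt|].
  split; [intros; simpl; lra|].
  split; [exists 0; intros; simpl; rewrite Rminus_diag, Rabs_R0, Rmult_0_l; lra|].
  split; [exact (ex_RInt_const 0 1 1)|].
  simpl. rewrite RInt_const. change ((1 - 0) * 1 = 1). ring.
Qed.

Lemma valid_seller_one_market : valid_instance two_sellers seller_one_market.
Proof.
  split; [|simpl; ring].
  intros qc [<- | []]. split; [simpl; lra | exact valid_seller_one_fan].
Qed.

Lemma buys_seller_zero_false (p : nat -> R) (w : R) :
  ~ buys two_sellers seller_one_fan p w 0.
Proof. intros [[_ [_ Hadm]] _]. discriminate Hadm. Qed.

Lemma buys_seller_one_iff (p : nat -> R) (w : R) :
  buys two_sellers seller_one_fan p w 1 <-> p 1%nat <= w.
Proof.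
  split.
  - intros [[_ [Hp _]] _]. exact Hp.
  - intros Hp. split; [repeat split; simpl; auto; lia|].
    intros j [_ [_ Hadm]] Hj. simpl in Hadm. contradiction.
Qed.

Lemma revenue_seller_zero (p : nat -> R) (x : R) :
  revenue two_sellers seller_one_market p 0 x = 0.
Proof.
  unfold revenue, seller_one_market. rewrite demand_single_type.
  rewrite (RInt_ext _ (fun _ => 0)), RInt_const.
  - change (x * ((1 - 0) * 0) = 0). ring.
  - intros w _. rewrite indic_false by apply buys_seller_zero_false. apply Rmult_0_r.
Qed.

Lemma revenue_seller_one (p : nat -> R) (x : R) :
  0 <= x <= 1 -> revenue two_sellers seller_one_market p 1 x = x * (1 - x).
Proof.
  intros Hx. unfold revenue, seller_one_market. rewrite demand_single_type. f_equal.
  apply RInt_step; [exact Hx | |]; intros w Hw; simpl.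
  - rewrite indic_false; [ring|].
    rewrite buys_seller_one_iff. unfold upd. simpl. lra.
  - rewrite indic_true; [ring|].
    rewrite buys_seller_one_iff. unfold upd. simpl. lra.
Qed.

Theorem proposition4p2 :
  exists (s : clc_setup) (G : instance s),
    0 < vbar s /\ valid_instance s G /\
    exists (pi : nat -> nat) (p : nat -> R),
      VOP s G pi p /\ ~ LNE s G p.
Proof.
  exists two_sellers, seller_one_market.
  split; [simpl; lra|]. split; [exact valid_seller_one_market|].
  exists (fun l => l), (fun _ => 0). split.
  - split; [intros l Hl; exact Hl|].
    split; [intros l m _ _ Hlm; exact Hlm|].
    split; [intros i Hi; exists i; auto|].
    split; [intros; simpl; lra|].
    split; [intros; lra|].
    intros l Hl. destruct l as [| [| l]]; simpl in *; [| apply local_max_on_point | lia].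
    apply local_max_on_of_max; [lra|].
    intros y _. rewrite !revenue_seller_zero. lra.
  - apply (not_LNE_of_profitable_increase _ _ _ 1 1); simpl; [lia | lra|].
    intros x Hx. rewrite !revenue_seller_one by lra. nra.
Qed.
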